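(* Let $K$ be a field and $q\in K$ a primitive $e$-th root of unity, where $e\ge 2$ is even. Let $D$ be the one-dimensional $\mathcal{H}_q(D_e)$-module on which $T_i^D$ acts as $-1$ for $0\le i\le e-1$, and $P$ its projective cover. Let $D^\lambda$ be the one-dimensional $\mathcal{H}_{q,1}(B_e)$-module on which $T_i^B$ acts as $-1$ for $0\le i\le e-1$, and $P^\lambda$ its projective cover. Then $P\cong \mathrm{Res}(P^\lambda)$ as $\mathcal{H}_q(D_e)$-modules.
   Context: $\mathcal{H}_{q,1}(B_n)$ is the $K$-algebra with generators $T_0^B,\dots,T_{n-1}^B$ and relations $(T_0^B+1)(T_0^B-1)=0$, $(T_i^B+1)(T_i^B-q)=0$ ($1\le i\le n-1$), $T_0^BT_1^BT_0^BT_1^B=T_1^BT_0^BT_1^BT_0^B$, $T_{i+1}^BT_i^BT_{i+1}^B=T_i^BT_{i+1}^BT_i^B$ ($1\le i\le n-2$), $T_i^BT_j^B=T_j^BT_i^B$ ($0\le i<j-1\le n-2$). $\mathcal{H}_q(D_n)$ is the $K$-algebra with generators $T_0^D,\dots,T_{n-1}^D$ and relations $(T_i^D+1)(T_i^D-q)=0$ ($0\le i\le n-1$), $T_0^DT_2^DT_0^D=T_2^DT_0^DT_2^D$, $T_0^DT_i^D=T_i^DT_0^D$ ($i\neq 2$), $T_{i+1}^DT_i^DT_{i+1}^D=T_i^DT_{i+1}^DT_i^D$ ($1\le i\le n-2$), $T_i^DT_j^D=T_j^DT_i^D$ ($1\le i<j-1\le n-2$). $\mathrm{Res}$ denotes restriction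 along the injective algebra homomorphism $\phi:\mathcal{H}_q(D_n)\to\mathcal{H}_{q,1}(B_n)$, $T_0^D\mapsto T_0^BT_1^BT_0^B$, $T_i^D\mapsto T_i^B$ ($1\le i\le n-1$). *)

From HB Require Import structures.
From mathcomp Require Import all_boot all_order all_algebra.
Set Implicit Arguments. Unset Strict Implicit. Unset Printing Implicit Defensive.
Import GRing.Theory.
Local Open Scope ring_scope.

(* Finite-dimensional modules over an algebra presented by generators
   T_0, ..., T_{n-1}: a module of dimension d is a family of matrices
   rho : nat -> 'M[K]_d (only rho 0, ..., rho (n-1) matter), acting on
   column vectors v : 'cV_d by v |-> rho i *m v, satisfying the defining
   relations (products written in the same order as in the algebra). *)

Section Hecke.
Variable K : fieldType.

Definition isHB (q : K) (n : nat) (d : nat) (rho : nat -> 'M[K]_d) : Prop :=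
  [/\ (rho 0%N + 1%:M) *m (rho 0%N - 1%:M) = 0,
      (forall i, (1 <= i <= n.-1)%N -> (rho i + 1%:M) *m (rho i - q%:M) = 0),
      rho 0%N *m rho 1%N *m rho 0%N *m rho 1%N
        = rho 1%N *m rho 0%N *m rho 1%N *m rho 0%N,
      (forall i, (1 <= i <= n - 2)%N ->
         rho i.+1 *m rho i *m rho i.+1 = rho i *m rho i.+1 *m rho i) &
      (forall i j, (i < j.-1)%N -> (j.-1 <= n - 2)%N -> (1 <= j)%N ->
         rho i *m rho j = rho j *m rho i)].

Definition isHD (q : K) (n : nat) (d : nat) (rho : nat -> 'M[K]_d) : Prop :=
  [/\ (forall i, (i <= n.-1)%N -> (rho i + 1%:M) *m (rho i - q%:M) = 0),
      (2 < n)%N -> rho 0%N *m rho 2%N *m rho 0%N = rho 2%N *m rho 0%N *m rho 2%N,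
      (forall i, (i <= n.-1)%N -> i != 2%N -> rho 0%N *m rho i = rho i *m rho 0%N),
      (forall i, (1 <= i <= n - 2)%N ->
         rho i.+1 *m rho i *m rho i.+1 = rho i *m rho i.+1 *m rho i) &
      (forall i j, (1 <= i)%N -> (i < j.-1)%N -> (j.-1 <= n - 2)%N -> (1 <= j)%N ->
         rho i *m rho j = rho j *m rho i)].

Definition is_hom (n : nat) (d1 d2 : nat) (rho1 : nat -> 'M[K]_d1)
  (rho2 : nat -> 'M[K]_d2) (f : 'M[K]_(d2, d1)) : Prop :=
  forall i, (i < n)%N -> f *m rho1 i = rho2 i *m f.

Definition is_surj (d1 d2 : nat) (f : 'M[K]_(d2, d1)) : Prop := \rank f = d2.

Definition mod_iso (n : nat) (d1 d2 : nat) (rho1 : nat -> 'M[K]_d1)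
  (rho2 : nat -> 'M[K]_d2) : Prop :=
  exists (f : 'M[K]_(d2, d1)) (g : 'M[K]_(d1, d2)),
    [/\ is_hom n rho1 rho2 f, is_hom n rho2 rho1 g,
        g *m f = 1%:M & f *m g = 1%:M].

Definition projective (rel : forall d, (nat -> 'M[K]_d) -> Prop) (n : nat)
  (dP : nat) (rhoP : nat -> 'M[K]_dP) : Prop :=
  forall (dM : nat) (rhoM : nat -> 'M[K]_dM) (dN : nat) (rhoN : nat -> 'M[K]_dN)
    (pi : 'M[K]_(dN, dM)) (f : 'M[K]_(dN, dP)),
    rel dM rhoM -> rel dN rhoN ->
    is_hom n rhoM rhoN pi -> is_surj pi -> is_hom n rhoP rhoN f ->
    exists g : 'M[K]_(dM, dP), is_hom n rhoP rhoM g /\ pi *m g = f.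

Definition essential_epi (rel : forall d, (nat -> 'M[K]_d) -> Prop) (n : nat)
  (dP : nat) (rhoP : nat -> 'M[K]_dP) (dS : nat) (rhoS : nat -> 'M[K]_dS)
  (p : 'M[K]_(dS, dP)) : Prop :=
  [/\ is_hom n rhoP rhoS p, is_surj p &
      forall (dM : nat) (rhoM : nat -> 'M[K]_dM) (g : 'M[K]_(dP, dM)),
        rel dM rhoM -> is_hom n rhoM rhoP g -> is_surj (p *m g) -> is_surj g].

Definition projective_cover (rel : forall d, (nat -> 'M[K]_d) -> Prop) (n : nat)
  (dP : nat) (rhoP : nat -> 'M[K]_dP) (dS : nat) (rhoS : nat -> 'M[K]_dS) : Prop :=
  [/\ rel dP rhoP, projective rel n rhoP &
      exists p : 'M[K]_(dS, dP), essential_epi rel n rhoP rhoS p].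

Definition resBD (d : nat) (rho : nat -> 'M[K]_d) : nat -> 'M[K]_d :=
  fun i => if i == 0%N then rho 0%N *m rho 1%N *m rho 0%N else rho i.

Definition sign_mod : nat -> 'M[K]_1 := fun _ => - 1%:M.

End Hecke.

From mathcomp Require Import all_boot all_order all_algebra.
From mathcomp Require Import zify ring.
Set Implicit Arguments. Unset Strict Implicit. Unset Printing Implicit Defensive.
Import GRing.Theory.
Local Open Scope ring_scope.

(* Restriction along phi sends D^lambda to D, and projective covers are unique up
   to isomorphism, so it suffices to show that Res P^lambda is a projective cover
   of D.  It is projective because phi has index two and Res has an exact right
   adjoint: the coinduced module N (+) N, on which T_0^B swaps the summands, T_1^B
   acts as diag(T_1^D, T_0^D) and T_i^B as diag(T_i^D, T_i^D) for i >= 2.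
   For essentiality, let p : P^lambda -> D^lambda be the essential epimorphism and
   U an H_q(D_e)-submodule of P^lambda not contained in ker p.  An
   H_{q,1}(B_e)-submodule not contained in ker p is all of P^lambda, and both
   W = U /\ T_0 U and V = U_0 + T_0 U_0 + (1 - T_0) U, with U_0 = U /\ ker p, are
   H_{q,1}(B_e)-submodules.  If W is not in ker p, then U contains W = P^lambda.
   Otherwise V is not in ker p, because p((1 - T_0) u) = 2 p(u) and 2 <> 0 (else
   q^(e/2) = 1); so U lies in V = P^lambda, and writing u = x + T_0 y + (1 - T_0) z
   with x, y in U_0 and z in U, the element T_0 (y - z) = u - x - z of W gives
   p(z) = 0 and then p(u) = 0, a contradiction. *)

Lemma stablemx_cap (K : fieldType) m1 m2 n (A : 'M[K]_(m1, n)) (B : 'M[K]_(m2, n)) f :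
  stablemx A f -> stablemx B f -> stablemx (A :&: B)%MS f.
Proof.
move=> sA sB; rewrite sub_capmx (submx_trans (submxMr f (capmxSl A B)) sA).
exact: submx_trans (submxMr f (capmxSr A B)) sB.
Qed.

Section ModuleMorphisms.
Variables (K : fieldType) (n : nat).

Lemma intertwine_mul d1 d2 (f : 'M[K]_(d2, d1)) A B A' B' :
  f *m A = A' *m f -> f *m B = B' *m f -> f *m (A *m B) = A' *m B' *m f.
Proof. by move=> fA fB; rewrite mulmxA fA -mulmxA fB mulmxA. Qed.

Lemma is_hom_mul d1 d2 d3 (rho1 : nat -> 'M[K]_d1) (rho2 : nat -> 'M[K]_d2)
    (rho3 : nat -> 'M[K]_d3) (g : 'M[K]_(d3, d2)) (f : 'M[K]_(d2, d1)) :
  is_hom n rho2 rho3 g -> is_hom n rho1 rho2 f -> is_hom n rho1 rho3 (g *m f).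
Proof. by move=> hg hf i lt_in; rewrite -mulmxA hf // !mulmxA hg. Qed.

Lemma is_hom_inverse d1 d2 (rho1 : nat -> 'M[K]_d1) (rho2 : nat -> 'M[K]_d2)
    (g : 'M[K]_(d2, d1)) (h : 'M[K]_(d1, d2)) :
  is_hom n rho1 rho2 g -> h *m g = 1%:M -> g *m h = 1%:M -> is_hom n rho2 rho1 h.
Proof.
move=> hg hgK ghK i lt_in.
by rewrite -[h *m _]mulmx1 -ghK !mulmxA -(mulmxA h) -hg // mulmxA hgK mul1mx.
Qed.

Lemma is_surj_row m (x : 'M[K]_(1, m)) : is_surj x <-> x != 0.
Proof.
rewrite /is_surj -mxrank_eq0; split=> [-> // | nz_x].
by apply/eqP; rewrite eqn_leq rank_leq_row lt0n.
Qed.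

Lemma is_hom_stable dM (rhoM : nat -> 'M[K]_dM) d (rho : nat -> 'M[K]_d)
    (g : 'M[K]_(d, dM)) i :
  is_hom n rhoM rho g -> (i < n)%N -> stablemx g^T (rho i)^T.
Proof. by move=> g_hom lt_in; rewrite -trmx_mul -g_hom // trmx_mul submxMl. Qed.

Variable rel : forall d, (nat -> 'M[K]_d) -> Prop.

Lemma essential_epi_endo_unit dP (rhoP : nat -> 'M[K]_dP) dS (rhoS : nat -> 'M[K]_dS)
    (p : 'M[K]_(dS, dP)) (h : 'M[K]_dP) :
  essential_epi rel n rhoP rhoS p -> rel rhoP -> is_hom n rhoP rhoP h ->
  p *m h = p -> h \in unitmx.
Proof.
case=> _ p_surj p_ess relP h_hom ph.
by rewrite -row_free_unit; apply/eqP; apply: (p_ess _ _ h relP h_hom); rewrite ph.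
Qed.

Lemma projective_cover_iso dS (rhoS : nat -> 'M[K]_dS)
    dP (rhoP : nat -> 'M[K]_dP) dQ (rhoQ : nat -> 'M[K]_dQ) :
  rel rhoS -> projective_cover rel n rhoP rhoS ->
  projective_cover rel n rhoQ rhoS -> mod_iso n rhoQ rhoP.
Proof.
move=> relS [relP projP [p pP]] [relQ projQ [p' pQ]].
have [[p_hom p_surj _] [p'_hom p'_surj _]] := (pP, pQ).
have [f [f_hom p'f]] := projP _ _ _ _ p' p relQ relS p'_hom p'_surj p_hom.
have [g [g_hom pg]] := projQ _ _ _ _ p p' relP relS p_hom p_surj p'_hom.
have gf_unit : g *m f \in unitmx.
  by apply: essential_epi_endo_unit pP relP (is_hom_mul g_hom f_hom) _; rewrite mulmxA pg.
have fg_unit : f *m g \in unitmx.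
  by apply: essential_epi_endo_unit pQ relQ (is_hom_mul f_hom g_hom) _; rewrite mulmxA p'f.
pose h := f *m invmx (g *m f).
have ghK : g *m h = 1%:M by rewrite mulmxA mulmxV.
have hgK : h *m g = 1%:M.
  have fgVfgK : invmx (f *m g) *m f *m g = 1%:M by rewrite -mulmxA mulVmx.
  suff -> : h = invmx (f *m g) *m f by [].
  by rewrite -[LHS]mul1mx -fgVfgK -(mulmxA _ g) ghK mulmx1.
by exists g, h; split=> //; apply: is_hom_inverse g_hom hgK ghK.
Qed.

End ModuleMorphisms.

Lemma prim_root_even_two_neq0 (R : idomainType) n (z : R) :
  ~~ odd n -> n.-primitive_root z -> 2 != 0 :> R.
Proof.
move=> even_n prim_z; apply/negP => /eqP two0.
have n_gt0 := prim_order_gt0 prim_z.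
have n_half : n = n./2.*2 by rewrite -[LHS]odd_double_half (negbTE even_n).
have zm1 : z ^+ n./2 = 1.
  have : (z ^+ n./2 - 1) ^+ 2 = 0.
    have -> : (z ^+ n./2 - 1) ^+ 2 = z ^+ n./2 ^+ 2 - 1 - 2 * (z ^+ n./2 - 1) by ring.
    by rewrite -exprM muln2 -n_half prim_expr_order // subrr two0 mul0r subr0.
  by move/eqP; rewrite expf_eq0 /= subr_eq0 => /eqP.
have : (n %| n./2)%N by rewrite (prim_order_dvd prim_z) zm1.
by move/(dvdn_leq _); lia.
Qed.

Section Involution.
Variables (K : fieldType) (d : nat) (s : 'M[K]_d).
Hypothesis s_invol : s *m s = 1%:M.

Lemma conj_invol_mul X Y : s *m X *m s *m (s *m Y *m s) = s *m (X *m Y) *m s.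
Proof. by rewrite !mulmxA -(mulmxA _ s s) s_invol mulmx1. Qed.

Lemma conj_invol_commute X : s *m X = X *m s -> s *m X *m s = X.
Proof. by move=> sX; rewrite sX -mulmxA s_invol mulmx1. Qed.

Lemma conj_invol_scalar a : s *m a%:M *m s = a%:M.
Proof. by apply: conj_invol_commute; rewrite scalar_mxC. Qed.

Lemma conj_invol_quadratic X a b :
  (X + a%:M) *m (X - b%:M) = 0 ->
  (s *m X *m s + a%:M) *m (s *m X *m s - b%:M) = 0.
Proof.
move=> X_quad.
rewrite -[a%:M]conj_invol_scalar -[b%:M]conj_invol_scalar -!mulmxBl -!mulmxDl.
by rewrite -mulmxBr -mulmxDr conj_invol_mul X_quad mulmx0 mul0mx.
Qed.

End Involution.

Section Restriction.
Variables (K : fieldType) (q : K) (e : nat).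

Lemma isHB_invol0 d (rho : nat -> 'M[K]_d) : isHB q e rho -> rho 0%N *m rho 0%N = 1%:M.
Proof.
case=> quad0 _ _ _ _; apply/eqP; rewrite -subr_eq0; apply/eqP.
by rewrite -quad0 mulmxDl mulmxBr mul1mx mulmx1 addrA subrK.
Qed.

Lemma isHB_comm0 d (rho : nat -> 'M[K]_d) i :
  isHB q e rho -> (2 <= i < e)%N -> rho 0%N *m rho i = rho i *m rho 0%N.
Proof. by case=> _ _ _ _ comm lt_ie; apply: comm; lia. Qed.

Hypothesis e_gt1 : (1 < e)%N.

Lemma resBD_isHD d (rho : nat -> 'M[K]_d) : isHB q e rho -> isHD q e (resBD rho).
Proof.
move=> rhoB; have s2 := isHB_invol0 rhoB.
have conj0 i : (2 <= i < e)%N -> rho 0%N *m rho i *m rho 0%N = rho i.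
  by move=> lt_ie; apply/conj_invol_commute/isHB_comm0.
case: rhoB => _ quad braid01 braid comm; rewrite /resBD; split=> /=.
- case=> [|i] lt_ie /=; last by apply: quad; lia.
  by apply/(conj_invol_quadratic s2)/quad; lia.
- move=> lt2e; rewrite -[rho 2%N]conj0 ?lt2e // !(conj_invol_mul s2) braid //; lia.
- case=> [|[|i]] lt_ie i_neq2 //=; first by rewrite !mulmxA braid01.
  rewrite -[rho i.+2]conj0; last by lia.
  by rewrite !(conj_invol_mul s2) comm //; lia.
- by case=> [|i] lt_ie //=; apply: braid.
- by case=> [|i] [|j] //= i_gt0 lt_ij le_je j_gt0; apply: comm.
Qed.

Lemma sign_isHD : isHD q e (sign_mod K).
Proof. by split=> // i _; rewrite addNr mul0mx. Qed.

Lemma resBD_hom d1 d2 (rho1 : nat -> 'M[K]_d1) (rho2 : nat -> 'M[K]_d2) f :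
  is_hom e rho1 rho2 f -> is_hom e (resBD rho1) (resBD rho2) f.
Proof.
move=> f_hom [|i] lt_ie; last exact: f_hom.
by rewrite /resBD /=; apply: intertwine_mul; [apply: intertwine_mul|]; apply: f_hom; lia.
Qed.

Lemma resBD_sign : resBD (sign_mod K) =1 sign_mod K.
Proof. by case=> [|i] //; rewrite /resBD /sign_mod /= mulNmx mul1mx mulmxN mulmx1 opprK. Qed.

End Restriction.

Section BlockDiagonal.
Variable K : fieldType.

Definition bdiag m n (A B : 'M[K]_(m, n)) : 'M[K]_(m + m, n + n) := block_mx A 0 0 B.

Definition bswap m : 'M[K]_(m + m) := block_mx 0 1%:M 1%:M 0.

Lemma bdiagM m n p (A B : 'M[K]_(m, n)) (C D : 'M[K]_(n, p)) :
  bdiag A B *m bdiag C D = bdiag (A *m C) (B *m D).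
Proof. by rewrite /bdiag mulmx_block !mulmx0 !mul0mx !addr0 !add0r. Qed.

Lemma bdiagD m n (A B C D : 'M[K]_(m, n)) : bdiag A B + bdiag C D = bdiag (A + C) (B + D).
Proof. by rewrite /bdiag add_block_mx !addr0. Qed.

Lemma bdiagB m n (A B C D : 'M[K]_(m, n)) : bdiag A B - bdiag C D = bdiag (A - C) (B - D).
Proof. by rewrite /bdiag opp_block_mx add_block_mx !oppr0 !addr0. Qed.

Lemma bdiag_scalar m (a : K) : bdiag (a%:M : 'M_m) a%:M = a%:M.
Proof. by rewrite /bdiag -scalar_mx_block. Qed.

Lemma bdiag0 m n : bdiag (0 : 'M[K]_(m, n)) 0 = 0.
Proof. exact: block_mx0. Qed.

Lemma bswap_bdiag m n (A B : 'M[K]_(m, n)) : bswap m *m bdiag A B = bdiag B A *m bswap n.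
Proof.
by rewrite /bdiag /bswap !mulmx_block !mulmx0 !mul0mx !addr0 !add0r !mul1mx !mulmx1.
Qed.

Lemma bswapK m : bswap m *m bswap m = 1%:M.
Proof.
by rewrite /bswap mulmx_block !mulmx0 !mul0mx !addr0 !add0r !mul1mx -scalar_mx_block.
Qed.

Lemma bswap_conj m (A B : 'M[K]_m) : bswap m *m bdiag A B *m bswap m = bdiag B A.
Proof. by rewrite bswap_bdiag -mulmxA bswapK mulmx1. Qed.

Lemma bswap_col m p (A B : 'M[K]_(m, p)) : bswap m *m col_mx A B = col_mx B A.
Proof. by rewrite /bswap mul_block_col !mul0mx !mul1mx addr0 add0r. Qed.

Lemma bdiag_col m n p (A B : 'M[K]_(m, n)) (C D : 'M[K]_(n, p)) :
  bdiag A B *m col_mx C D = col_mx (A *m C) (B *m D).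
Proof. by rewrite /bdiag mul_block_col !mul0mx addr0 add0r. Qed.

Lemma row_mx10_bdiag m n (A B : 'M[K]_(m, n)) :
  row_mx 1%:M 0 *m bdiag A B = A *m row_mx 1%:M 0.
Proof.
by rewrite /bdiag mul_row_block !mulmx0 !mul0mx !addr0 mul1mx mul_mx_row mulmx1 mulmx0.
Qed.

End BlockDiagonal.

Section Coinduction.
Variables (K : fieldType) (q : K) (e : nat).
Hypothesis e_gt1 : (1 < e)%N.

Definition coindBD d (sig : nat -> 'M[K]_d) (i : nat) : 'M[K]_(d + d) :=
  match i with
  | 0 => bswap K d
  | 1 => bdiag (sig 1%N) (sig 0%N)
  | _ => bdiag (sig i) (sig i)
  end.

Lemma coindBD_isHB d (sig : nat -> 'M[K]_d) : isHD q e sig -> isHB q e (coindBD sig).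
Proof.
have quad_bdiag (A B : 'M[K]_d) a b :
    (A + a%:M) *m (A - b%:M) = 0 -> (B + a%:M) *m (B - b%:M) = 0 ->
    (bdiag A B + a%:M) *m (bdiag A B - b%:M) = 0.
  by move=> qA qB; rewrite -!bdiag_scalar bdiagD bdiagB bdiagM qA qB bdiag0.
case=> quad braid02 comm0 braid comm; split=> /=.
- by rewrite mulmxDl mulmxBr bswapK mul1mx mulmx1 addrA subrK subrr.
- by case=> [|[|i]] lt_ie //=; apply: quad_bdiag; apply: quad; lia.
- rewrite bswap_conj.
  have -> : forall A B : 'M[K]_(d + d), A *m B *m A *m B = A *m (B *m A *m B).
    by move=> A B; rewrite !mulmxA.
  by rewrite bswap_conj !bdiagM comm0 //; lia.
- case=> [|[|[|i]]] lt_ie //=; rewrite !bdiagM; congr bdiag; 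
    by first [apply: braid | apply/esym/braid02]; lia.
- case=> [|[|i]] [|[|[|j]]] //= lt_ij le_je j_gt0; rewrite ?bswap_bdiag // !bdiagM;
    by congr bdiag; first [apply: comm0 | apply: comm]; lia.
Qed.

Lemma coindBD_hom dM dN (rhoM : nat -> 'M[K]_dM) (rhoN : nat -> 'M[K]_dN) pi :
  is_hom e rhoM rhoN pi -> is_hom e (coindBD rhoM) (coindBD rhoN) (bdiag pi pi).
Proof.
move=> pi_hom [|[|i]] lt_ie /=; first by rewrite bswap_bdiag.
  by rewrite !bdiagM !pi_hom //; lia.
by rewrite !bdiagM pi_hom.
Qed.

Lemma hom_coindBD d (rho : nat -> 'M[K]_d) dN (sig : nat -> 'M[K]_dN) f :
  isHB q e rho -> is_hom e (resBD rho) sig f ->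
  is_hom e rho (coindBD sig) (col_mx f (f *m rho 0%N)).
Proof.
move=> rhoB f_hom; have s2 := isHB_invol0 rhoB.
have fT i : (i.+1 < e)%N -> f *m rho i.+1 = sig i.+1 *m f := f_hom i.+1.
case=> [|[|i]] lt_ie /=; rewrite mul_col_mx.
- by rewrite bswap_col -mulmxA s2 mulmx1.
- rewrite bdiag_col -fT // mulmxA -f_hom; last exact: ltnW.
  by rewrite /resBD /= -!mulmxA s2 mulmx1.
- by rewrite bdiag_col -fT // -mulmxA (isHB_comm0 rhoB) // !mulmxA fT.
Qed.

Lemma coindBD_counit d (sig : nat -> 'M[K]_d) :
  is_hom e (resBD (coindBD sig)) sig (row_mx 1%:M 0).
Proof.
case=> [|[|i]] lt_ie; rewrite /resBD /=; last 2 first.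
- exact: row_mx10_bdiag.
- exact: row_mx10_bdiag.
by rewrite bswap_conj row_mx10_bdiag.
Qed.

Lemma resBD_projective d (rho : nat -> 'M[K]_d) :
  isHB q e rho -> projective (isHB q e) e rho -> projective (isHD q e) e (resBD rho).
Proof.
move=> rhoB rho_proj dM rhoM dN rhoN pi f rhoMD rhoND pi_hom pi_surj f_hom.
have pi2_surj : is_surj (bdiag pi pi).
  by rewrite /is_surj rank_diag_block_mx pi_surj.
have [G [G_hom piG]] := rho_proj _ _ _ _ _ _ (coindBD_isHB rhoMD) (coindBD_isHB rhoND)
  (coindBD_hom pi_hom) pi2_surj (hom_coindBD rhoB f_hom).
exists (row_mx 1%:M 0 *m G); split.
  exact: is_hom_mul (coindBD_counit _) (resBD_hom e_gt1 G_hom).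
by rewrite mulmxA -(row_mx10_bdiag pi pi) -mulmxA piG mul_row_col mul1mx mul0mx addr0.
Qed.

End Coinduction.

Section SubmoduleRestriction.
Variables (K : fieldType) (k d : nat) (B : 'M[K]_(k, d)).
Hypothesis B_free : row_free B.

(* When X stabilises the column space of B^T, restr_mx X is the matrix of its
   restriction in the basis formed by the columns of B^T. *)
Definition restr_mx (X : 'M[K]_d) : 'M[K]_k := (B *m X^T *m pinvmx B)^T.

Lemma restr_mx_hom X : stablemx B X^T -> X *m B^T = B^T *m restr_mx X.
Proof. by move=> sX; rewrite /restr_mx -trmx_mul mulmxKpV // trmx_mul trmxK. Qed.

Lemma restr_mxM X Y : stablemx B Y^T -> restr_mx (X *m Y) = restr_mx X *m restr_mx Y.
Proof.
move=> sY; rewrite /restr_mx -trmx_mul.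
rewrite (mulmxA (B *m Y^T *m pinvmx B)) (mulmxA (B *m Y^T *m pinvmx B) B) mulmxKpV //.
by rewrite [(X *m Y)^T]trmx_mul (mulmxA B).
Qed.

Lemma restr_mxD X Y : restr_mx (X + Y) = restr_mx X + restr_mx Y.
Proof. by rewrite /restr_mx linearD mulmxDr mulmxDl linearD. Qed.

Lemma restr_mxB X Y : restr_mx (X - Y) = restr_mx X - restr_mx Y.
Proof. by rewrite /restr_mx linearB mulmxBr mulmxBl linearB. Qed.

Lemma restr_mx_scalar a : restr_mx a%:M = a%:M.
Proof.
by rewrite /restr_mx tr_scalar_mx mul_mx_scalar -scalemxAl mulmxVp // scalemx1 tr_scalar_mx.
Qed.

Lemma restr_mx_quadratic X a b : stablemx B X^T ->
  (X + a%:M) *m (X - b%:M) = 0 -> (restr_mx X + a%:M) *m (restr_mx X - b%:M) = 0.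
Proof.
move=> sX X_quad; have sXb : stablemx B (X - b%:M)^T.
  by rewrite linearB /= tr_scalar_mx stablemxD ?stablemxN ?stablemxC.
rewrite -!restr_mx_scalar -restr_mxD -restr_mxB -restr_mxM // X_quad.
by rewrite /restr_mx !linear0 mul0mx trmx0.
Qed.

Lemma restr_isHB q e (rho : nat -> 'M[K]_d) : (1 < e)%N -> isHB q e rho ->
  (forall i, (i < e)%N -> stablemx B (rho i)^T) -> isHB q e (restr_mx \o rho).
Proof.
move=> e_gt1 [quad0 quad braid01 braid comm] stab; split=> /=.
- by apply: restr_mx_quadratic quad0; apply: stab; lia.
- move=> i lt_ie; apply: restr_mx_quadratic (quad _ lt_ie); apply: stab; lia.
- by rewrite -!restr_mxM; [rewrite braid01 | apply: stab; lia..].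
- move=> i lt_ie.
  by rewrite -!restr_mxM; [rewrite braid | apply: stab; lia..].
- move=> i j lt_ij le_je j_gt0.
  by rewrite -!restr_mxM; [rewrite (comm i j) | apply: stab; lia..].
Qed.

End SubmoduleRestriction.

Section EssentialEpi.
Variables (K : fieldType) (q : K) (e : nat) (d : nat) (rho : nat -> 'M[K]_d).
Variable p : 'M[K]_(1, d).
Hypotheses (e_gt1 : (1 < e)%N) (rhoB : isHB q e rho).
Hypothesis p_ess : essential_epi (isHB q e) e rho (sign_mod K) p.

Local Notation t i := (rho i)^T.
Local Notation N := (kermx p^T).
Local Notation V U := ((U :&: N) + (U :&: N) *m t 0%N + U *m (1%:M - t 0%N))%MS.

(* A submodule of the column-vector module rho is encoded by a matrix whose rows
   span its transpose, so T_i-stability of U reads stablemx U (rho i)^T. *)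
Lemma essential_epi_stable_full m (S : 'M[K]_(m, d)) :
  (forall i, (i < e)%N -> stablemx S (rho i)^T) -> ~~ (S <= N)%MS -> \rank S = d.
Proof.
move=> S_stable S_ker; have [_ _ p_min] := p_ess.
pose B := row_base S.
have B_stable i : (i < e)%N -> stablemx B (rho i)^T.
  by move=> lt_ie; rewrite stablemx_row_base S_stable.
have B_hom : is_hom e (restr_mx B \o rho) rho B^T.
  by move=> i lt_ie; rewrite (restr_mx_hom (B_stable i lt_ie)).
have pB_surj : is_surj (p *m B^T).
  apply/is_surj_row; rewrite -trmx_eq0 trmx_mul trmxK.
  by apply: contra S_ker => /eqP/sub_kermxP; rewrite (eq_row_base S).
have := p_min _ _ _ (restr_isHB (row_base_free S) e_gt1 rhoB B_stable) B_hom pB_surj.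
by rewrite /is_surj mxrank_tr (eq_row_base S).
Qed.

Definition stable_resBD m (U : 'M[K]_(m, d)) :=
  forall i, (i < e)%N -> stablemx U (resBD rho i)^T.

Lemma t_sign i : (i < e)%N -> t i *m p^T = - p^T.
Proof.
have [p_hom _ _] := p_ess.
by move=> lt_ie; rewrite -trmx_mul p_hom // /sign_mod mulNmx mul1mx linearN.
Qed.

Lemma resBD_t0 : (resBD rho 0)^T = t 0%N *m t 1%N *m t 0%N.
Proof. by rewrite /resBD /= !trmx_mul mulmxA. Qed.

Lemma resBD_t_sign i : (i < e)%N -> (resBD rho i)^T *m p^T = - p^T.
Proof.
case: i => [|i] lt_ie; last exact: t_sign.
have [t0p t1p] := (t_sign (ltnW e_gt1), t_sign e_gt1).
by rewrite resBD_t0 -!mulmxA t0p mulmxN t1p opprK t0p.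
Qed.

Lemma t0_invol : t 0%N *m t 0%N = 1%:M.
Proof. by rewrite -trmx_mul (isHB_invol0 rhoB) trmx1. Qed.

Lemma t0_comm i : (2 <= i < e)%N -> t 0%N *m t i = t i *m t 0%N.
Proof. by move=> lt_ie; rewrite -!trmx_mul (isHB_comm0 rhoB). Qed.

Lemma ker_stable X : X *m p^T = - p^T -> stablemx N X.
Proof. by move=> Xp; rewrite sub_kermx -mulmxA Xp mulmxN mulmx_ker oppr0. Qed.

Lemma stable_resBD_capker m (U : 'M[K]_(m, d)) : stable_resBD U -> stable_resBD (U :&: N)%MS.
Proof.
by move=> U_stable i lt_ie; rewrite stablemx_cap ?U_stable ?ker_stable ?resBD_t_sign.
Qed.

Lemma stable_resBD_t0 m (U : 'M[K]_(m, d)) i :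
  stable_resBD U -> (1 <= i < e)%N -> stablemx (U *m t 0%N) (t i).
Proof.
move=> U_stable; case: i => [|[|i]] // lt_ie.
  have -> : U *m t 0%N *m t 1%N = U *m (resBD rho 0)^T *m t 0%N.
    by rewrite resBD_t0 -!mulmxA t0_invol mulmx1.
  by rewrite submxMr // U_stable //; lia.
by rewrite -mulmxA t0_comm // mulmxA submxMr // (U_stable i.+2).
Qed.

Lemma stable_resBD_cap m (U : 'M[K]_(m, d)) i :
  stable_resBD U -> (i < e)%N -> stablemx (U :&: U *m t 0%N)%MS (t i).
Proof.
move=> U_stable; case: i => [|i] lt_ie; last first.
  by rewrite stablemx_cap ?(U_stable i.+1) ?stable_resBD_t0.
have Ut0t0 : U *m t 0%N *m t 0%N = U by rewrite -mulmxA t0_invol mulmx1.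
rewrite capmxC sub_capmx submxMr ?capmxSr //=.
by rewrite -[X in (_ <= X)%MS]Ut0t0 submxMr ?capmxSl.
Qed.

Lemma stable_resBD_V m (U : 'M[K]_(m, d)) i :
  stable_resBD U -> (i < e)%N -> stablemx (V U) (t i).
Proof.
move=> U_stable lt_ie; set U0 := (U :&: N)%MS.
have U0_stable := stable_resBD_capker U_stable.
have inV1 n (X : 'M[K]_(n, d)) : (X <= U0)%MS -> (X <= V U)%MS.
  by move/submx_trans; apply; rewrite -addsmxA addsmxSl.
have inV2 n (X : 'M[K]_(n, d)) : (X <= U0 *m t 0%N)%MS -> (X <= V U)%MS.
  by move/submx_trans; apply; apply: submx_trans (addsmxSl _ _); apply: addsmxSr.
have inV3 n (X : 'M[K]_(n, d)) : (X <= U *m (1%:M - t 0%N))%MS -> (X <= V U)%MS.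
  by move/submx_trans; apply; rewrite addsmxSr.
rewrite addsmxMr addsmx_sub addsmxMr addsmx_sub -andbA; apply/and3P.
case: i lt_ie => [|i] lt_ie; split.
- exact: inV2.
- by apply: inV1; rewrite -mulmxA t0_invol mulmx1.
- apply: inV3; rewrite -mulmxA mulmxBl mul1mx t0_invol -opprB mulmxN.
  by rewrite (eqmx_opp (U *m (1%:M - t 0%N))).
- exact/inV1/(U0_stable i.+1).
- by apply/inV2/stable_resBD_t0.
case: i lt_ie => [|i] lt_ie; last first.
  have -> : U *m (1%:M - t 0%N) *m t i.+2 = U *m t i.+2 *m (1%:M - t 0%N).
    by rewrite -!mulmxA mulmxBl mul1mx !mulmxBr mulmx1 t0_comm.
  exact/inV3/submxMr/(U_stable i.+2).
have -> : U *m (1%:M - t 0%N) *m t 1%N = U *m t 1%N *m (1%:M - t 0%N)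
    + (U *m t 1%N - U *m (resBD rho 0)^T) *m t 0%N.
  rewrite resBD_t0 !mulmxBr !mulmxBl !mulmx1 -!mulmxA t0_invol mulmx1.
  by rewrite addrA subrK.
apply: addmx_sub; first by apply/inV3/submxMr/(U_stable 1%N).
apply/inV2/submxMr; rewrite sub_capmx; apply/andP; split.
  by rewrite addmx_sub ?eqmx_opp ?(U_stable 1%N) ?U_stable //; lia.
apply/sub_kermxP; rewrite mulmxBl -!mulmxA t_sign // resBD_t_sign; last by lia.
by rewrite subrr.
Qed.

Lemma submx_V_ker m (U : 'M[K]_(m, d)) :
  (U <= V U)%MS -> (U :&: U *m t 0%N <= N)%MS -> (U <= N)%MS.
Proof.
set U0 := (U :&: N)%MS; move=> /sub_addsmxP[[D1 D2] /= defU] W_ker.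
have /sub_addsmxP[[E1 E2] /= defD1] : (D1 *m (U0 + U0 *m t 0%N)%MS <= U0 + U0 *m t 0%N)%MS.
  exact: submxMl.
have U0U : (U0 <= U)%MS := capmxSl _ _.
have U0N : (U0 <= N)%MS := capmxSr _ _.
pose X := E1 *m U0; pose Y := E2 *m U0; pose Z := D2 *m U.
have [XU0 YU0 ZU] : [/\ (X <= U0)%MS, (Y <= U0)%MS & (Z <= U)%MS] by rewrite !submxMl.
have [/sub_kermxP Xp /sub_kermxP Yp] : (X <= N)%MS /\ (Y <= N)%MS.
  by split; apply: submx_trans U0N.
have WE : (Y - Z) *m t 0%N = U - (X + Z).
  rewrite defU defD1 -/X (mulmxA E2) -/Y (mulmxA D2) -/Z mulmxBl mulmxBr mulmx1.
  by rewrite addrACA addrC addrK.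
have /sub_kermxP Wp : ((Y - Z) *m t 0%N <= N)%MS.
  apply: submx_trans W_ker; rewrite sub_capmx submxMr ?addmx_sub ?eqmx_opp //.
    by rewrite WE addmx_sub ?eqmx_opp ?addmx_sub // (submx_trans XU0 U0U).
  exact: submx_trans YU0 U0U.
have Zp : Z *m p^T = 0.
  by rewrite -Wp -mulmxA t_sign 1?ltnW // mulmxN mulmxBl Yp sub0r opprK.
have -> : U = (Y - Z) *m t 0%N + (X + Z) by rewrite WE subrK.
by apply/sub_kermxP; rewrite mulmxDl Wp add0r mulmxDl Xp Zp addr0.
Qed.

Hypothesis two_neq0 : 2 != 0 :> K.

Lemma sub_ker_1_t0 m (U : 'M[K]_(m, d)) : (U *m (1%:M - t 0%N) <= N)%MS -> (U <= N)%MS.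
Proof.
move=> /sub_kermxP; rewrite -mulmxA mulmxBl mul1mx t_sign ?(ltnW e_gt1) // opprK.
rewrite mulmxDr -mulr2n -scaler_nat => /eqP; rewrite scalemx_eq0 (negbTE two_neq0) /=.
by move/eqP/sub_kermxP.
Qed.

Lemma stable_resBD_full m (U : 'M[K]_(m, d)) :
  stable_resBD U -> ~~ (U <= N)%MS -> \rank U = d.
Proof.
move=> U_stable U_ker; have full := essential_epi_stable_full.
apply/eqP; rewrite eqn_leq rank_leq_col /=.
have [W_ker | W_ker] := boolP (U :&: U *m t 0%N <= N)%MS; last first.
  rewrite -[X in (X <= _)%N](full _ _ _ W_ker); last by move=> i; apply: stable_resBD_cap.
  exact/mxrankS/capmxSl.
have V_ker : ~~ (V U <= N)%MS.
  by apply: contra U_ker => /(submx_trans (addsmxSr _ _)); apply: sub_ker_1_t0.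
have UV : (U <= V U)%MS.
  apply/submx_full; rewrite /row_full (full _ _ _ V_ker) // => i.
  exact: stable_resBD_V.
by case/negP: U_ker; apply: submx_V_ker.
Qed.

Lemma resBD_essential_epi : essential_epi (isHD q e) e (resBD rho) (sign_mod K) p.
Proof.
have [p_hom p_surj p_min] := p_ess; split=> //.
  by move=> i lt_ie; rewrite -resBD_sign; apply: (resBD_hom e_gt1 p_hom).
move=> dM rhoM g _ g_hom /is_surj_row pg_neq0.
rewrite /is_surj -mxrank_tr; apply: stable_resBD_full => [i|].
  exact: is_hom_stable g_hom.
by apply: contra pg_neq0 => /sub_kermxP; rewrite -trmx_mul => /eqP; rewrite trmx_eq0.
Qed.

End EssentialEpi.

Theorem lemma3p6 (K : fieldType) (e : nat) (q : K) :
  (2 <= e)%N -> ~~ odd e -> e.-primitive_root q ->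
  forall (dP : nat) (rhoP : nat -> 'M[K]_dP),
    projective_cover (isHD q e) e rhoP (sign_mod K) ->
  forall (dPl : nat) (rhoPl : nat -> 'M[K]_dPl),
    projective_cover (isHB q e) e rhoPl (sign_mod K) ->
  mod_iso e (resBD rhoPl) rhoP.
Proof.
move=> e_gt1 e_even q_prim dP rhoP coverP dPl rhoPl [rhoPlB rhoPl_proj [p p_ess]].
have two_neq0 := prim_root_even_two_neq0 e_even q_prim.
apply: projective_cover_iso (sign_isHD q e) coverP _; split.
- exact: resBD_isHD.
- exact: resBD_projective.
- by exists p; apply: resBD_essential_epi.
Qed.
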